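(* Let $k\ge 0$ and $K=2k^3$. Let $\mathcal I$ be an interpretation coloured by $\kappa$ that is $K$-sparse, and let $\mathcal Q$ be a finite interpretation with $|\Delta^{\mathcal Q}|\le k$. Then $\mathcal Q$ maps homomorphically into $\mathcal I$ if and only if $\mathcal Q$ maps homomorphically into the quotient $\mathcal I/{\sim_K}$.
   Context: Homomorphisms are maps between domains preserving membership in every concept name and every role name. Distance: view $\mathcal I$ as an undirected graph with an edge between $x,y$ whenever $(x,y)$ or $(y,x)\in r^{\mathcal I}$ for some role name $r$; $d_{\mathcal I}(x,y)$ is the length of a shortest undirected path ($\infty$ if none). $N_k(x)=\{y: d_{\mathcal I}(x,y)\le k\}$, and $\mathcal I\upharpoonright N_k(x)$ is the induced subinterpretation (domain $N_k(x)$, concepts and roles restricted). A coloured interpretation is $\mathcal I$ with a partial map $\kappa\colon\mathrm{dom}(\kappa)\to C$, $\mathrm{dom}(\kappa)\subseteq\Delta^{\mathcal I}$, $C$ a set of colours; subinterpretations are coloured by the restriction of $\kappa$. A homomorphism $h$ from $\mathcal I$ (coloured by $\kappa$) to $\mathcal J$ (coloured by $\theta$) preserves colours if for all $x$: $x\in\mathrm{dom}(\kappa)\iff h(x)\in\mathrm{dom}(\theta)$, and then $\kappa(x)=\theta(h(x))$. $x\sim_k y$ iff $x=y$, or $x,y\in\mathrm{dom}(\kappa)$, $\kappa(x)=\kappa(y)$, and there are colour-preserving homomorphisms $\mathcal I\upharpoonright N_k(x)\to\mathcal I\upharpoonright N_k(y)$ mapping $x$ to $y$ and $\mathcal I\upharpoonright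 N_k(y)\to\mathcal I\upharpoonright N_k(x)$ mapping $y$ to $x$. $\mathcal I$ is $k$-sparse if for every $x$ and distinct $y,y'\in N_k(x)\cap\mathrm{dom}(\kappa)$ we have $\kappa(y)\ne\kappa(y')$. For an equivalence relation $\sim$ on $\Delta^{\mathcal I}$, the quotient $\mathcal I/{\sim}$ has domain the classes $[x]_\sim$, $A^{\mathcal I/\sim}=\{[x]_\sim: x\in A^{\mathcal I}\}$ and $r^{\mathcal I/\sim}=\{([x]_\sim,[y]_\sim):(x,y)\in r^{\mathcal I}\}$. *)

From mathcomp Require Import all_boot.
Unset Printing Implicit Defensive.

Record interp (CN RN : Type) := Interp {
  dom :> Type;
  cnc : CN -> dom -> Prop;
  rol : RN -> dom -> dom -> Prop
}.
Arguments Interp {CN RN} dom cnc rol.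
Arguments dom {CN RN} i.
Arguments cnc {CN RN} i _ _.
Arguments rol {CN RN} i _ _ _.


Definition is_hom {CN RN : Type} (I J : interp CN RN) (h : I -> J) : Prop :=
  (forall (A : CN) (x : I), cnc I A x -> cnc J A (h x)) /\
  (forall (r : RN) (x y : I), rol I r x y -> rol J r (h x) (h y)).

Definition maps_into {CN RN : Type} (I J : interp CN RN) : Prop :=
  exists h : I -> J, is_hom I J h.

Definition adj {CN RN : Type} (I : interp CN RN) (x y : I) : Prop :=
  exists r : RN, rol I r x y \/ rol I r y x.

(* within I n x y  <->  d_I(x,y) <= n *)
Fixpoint within {CN RN : Type} (I : interp CN RN) (n : nat) (x y : I) : Prop :=
  match n with
  | 0 => x = y
  | n'.+1 => within I n' x y \/ exists z, within I n' x z /\ adj I z y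
  end.

Definition restrict {CN RN : Type} (I : interp CN RN) (P : I -> Prop) : interp CN RN :=
  Interp {z : I | P z}
    (fun A z => cnc I A (proj1_sig z))
    (fun r z w => rol I r (proj1_sig z) (proj1_sig w)).

Definition nbhd {CN RN : Type} (I : interp CN RN) (n : nat) (x : I) : interp CN RN :=
  restrict I (within I n x).

(* x ~_n y for I coloured by kappa (partial colouring as an option-valued map);
   colours of the subinterpretations are the restriction of kappa. *)
Definition simk {CN RN : Type} {C : Type} (I : interp CN RN) (kappa : I -> option C)
    (n : nat) (x y : I) : Prop :=
  x = y \/
  (exists c : C, kappa x = Some c /\ kappa y = Some c /\
    (exists h : nbhd I n x -> nbhd I n y,
        is_hom (nbhd I n x) (nbhd I n y) h /\
        (forall z, kappa (proj1_sig z) = kappa (proj1_sig (h z))) /\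
        (forall z, proj1_sig z = x -> proj1_sig (h z) = y)) /\
    (exists h : nbhd I n y -> nbhd I n x,
        is_hom (nbhd I n y) (nbhd I n x) h /\
        (forall z, kappa (proj1_sig z) = kappa (proj1_sig (h z))) /\
        (forall z, proj1_sig z = y -> proj1_sig (h z) = x))).

Definition sparse {CN RN : Type} {C : Type} (I : interp CN RN) (kappa : I -> option C)
    (n : nat) : Prop :=
  forall x y y' : I, within I n x y -> within I n x y' -> y <> y' ->
    forall c c' : C, kappa y = Some c -> kappa y' = Some c' -> c <> c'.

Definition quotient {CN RN : Type} (I : interp CN RN) (R : I -> I -> Prop) : interp CN RN :=
  Interp {S : I -> Prop | exists x, S = R x}
    (fun A S => exists x, proj1_sig S = R x /\ cnc I A x)
    (fun r S T => exists x y, proj1_sig S = R x /\ proj1_sig T = R y /\ rol I r x y).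

From mathcomp Require Import all_boot zify.
From Stdlib Require Import ClassicalEpsilon.

(* The projection x |-> [x] turns a homomorphism Q -> I into one Q -> I/~.
   Conversely, pick a representative [rep q] of the class of the image of each q.
   Along an edge of Q the representatives are ~_K-equivalent to adjacent points of I,
   and ~_K supplies colour-preserving homomorphisms of K-balls; composing them along a
   path of fewer than k edges from a root of the component of q gives a
   colour-preserving homomorphism T of a ball of radius > K - k around [rep q],
   sending [rep q] to within distance < k of the root's representative c.
   Set [lift q := T (rep q)]. For a coloured q this point is forced: K-sparseness
   makes it the only point of its colour near c, so the choices made along different
   paths agree. Uncoloured points are alone in their class, so an uncoloured region
   of Q is realised verbatim in I and is moved rigidly by a single T.
   This only needs K >= 2k. *)

Section Distance.

Context {CN RN : Type} {I : interp CN RN}.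

Lemma within_refl n (x : I) : within I n x x.
Proof. by elim: n => [|n IH] //=; left. Qed.

Lemma within_le {m n} {x y : I} : m <= n -> within I m x y -> within I n x y.
Proof.
elim: n => [|n IH]; first by rewrite leqn0 => /eqP ->.
by rewrite leq_eqVlt => /orP [/eqP -> // | /IH Hmn /Hmn]; left.
Qed.

Lemma adj_sym {x y : I} : adj I x y -> adj I y x.
Proof. by case=> r [H|H]; exists r; [right|left]. Qed.

Lemma within1_adj {x y : I} : adj I x y -> within I 1 x y.
Proof. by move=> Hxy; right; exists x. Qed.

Lemma within_trans {m n} {x y z : I} :
  within I m x y -> within I n y z -> within I (m + n) x z.
Proof.
move=> Hxy; elim: n z => [|n IH] z /=; first by move=> <-; rewrite addn0.
rewrite addnS => -[Hyz | [w [Hyw Hwz]]]; first by left; apply: IH.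
by right; exists w; split=> //; apply: IH.
Qed.

End Distance.

(* A colour-preserving homomorphism from the ball [N_m(c)] into [I], represented as a
   total map that is constrained only on the ball; see [simk_ball_hom]. *)
Definition ball_hom {CN RN C : Type} {I : interp CN RN} (kappa : I -> option C)
    (c : I) (m : nat) (T : I -> I) : Prop :=
  [/\ forall A x, within I m c x -> cnc I A x -> cnc I A (T x),
      forall r x y, within I m c x -> within I m c y -> rol I r x y -> rol I r (T x) (T y)
    & forall x, within I m c x -> kappa (T x) = kappa x].

Section BallHomomorphisms.

Context {CN RN C : Type} {I : interp CN RN} {kappa : I -> option C}.

Lemma ball_hom_id c m : ball_hom kappa c m id.
Proof. by []. Qed.

Lemma ball_hom_le {c m n T} : m <= n -> ball_hom kappa c n T -> ball_hom kappa c m T.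
Proof.
move=> mn [HA HR HK]; split=> [A x|r x y|x] Hx.
- by apply: HA; apply: within_le mn Hx.
- by move=> Hy; apply: HR; apply: within_le mn _.
- by apply: HK; apply: within_le mn Hx.
Qed.

Lemma ball_hom_within {c m T j z} :
  ball_hom kappa c m T -> j <= m -> within I j c z -> within I j (T c) (T z).
Proof.
case=> _ HR _; elim: j z => [|j IH] z jm /=; first by move=> ->.
have jm' := ltnW jm.
case=> [Hz | [w [Hw [r Hr]]]]; first by left; apply: IH.
have Hwm : within I m c w by apply: within_le jm' Hw.
have Hzm : within I m c z by apply: within_le jm _; right; exists w; by split=> //; exists r.
right; exists (T w); split; first exact: IH.
by exists r; case: Hr => Hr; [left|right]; apply: HR.
Qed.

Lemma ball_hom_shift {c b m j T} :
  j <= m -> ball_hom kappa c m T -> within I j c b -> ball_hom kappa b (m - j) T.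
Proof.
move=> jm [HA HR HK] Hb.
have Hin x : within I (m - j) b x -> within I m c x.
  move=> Hx; apply: within_le (within_trans Hb Hx); lia.
by split=> [A x|r x y|x] /Hin Hx; [apply: HA | move=> /Hin; apply: HR | apply: HK].
Qed.

Lemma ball_hom_comp {c m T T'} :
  ball_hom kappa c m T -> ball_hom kappa (T c) m T' -> ball_hom kappa c m (T' \o T).
Proof.
move=> HT [HA' HR' HK']; have Him := ball_hom_within HT (leqnn m).
case: HT => HA HR HK.
split=> [A x|r x y|x] Hx /=.
- by move=> HAx; apply: HA' (Him _ Hx) (HA _ _ Hx HAx).
- by move=> Hy Hr; apply: HR' (Him _ Hx) (Him _ Hy) (HR _ _ _ Hx Hy Hr).
- by rewrite HK' ?HK //; apply: Him.
Qed.

Lemma simk_refl n (x : I) : simk I kappa n x x.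
Proof. by left. Qed.

Lemma simk_sym {n} {x y : I} : simk I kappa n x y -> simk I kappa n y x.
Proof.
case=> [-> | [c [Hx [Hy [Hxy Hyx]]]]]; first exact: simk_refl.
by right; exists c.
Qed.

Lemma simk_colour {n} {x y : I} : simk I kappa n x y -> kappa x = kappa y.
Proof. by case=> [-> | [c [-> [-> _]]]]. Qed.

Lemma simk_uncoloured {n} {x y : I} : simk I kappa n x y -> kappa y = None -> x = y.
Proof. by case=> [// | [c [_ [-> _]]]]. Qed.

Lemma simk_ball_hom {n} {x y : I} :
  simk I kappa n x y -> exists2 T, ball_hom kappa x n T & T x = y.
Proof.
case=> [<- | [c [_ [_ [[h [[hA hR] [hK hx]]] _]]]]]; first by exists id.
pose T z := if excluded_middle_informative (within I n x z) is left Hz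
            then proj1_sig (h (exist _ z Hz)) else z.
exists T; last first.
  by rewrite /T; case: excluded_middle_informative => [Hx|[]]; [apply: hx | apply: within_refl].
split=> [A z|r z w|z] Hz; rewrite /T; case: excluded_middle_informative => [Hz'|[]] //.
- exact: (hA A (exist _ z Hz')).
- move=> Hw; case: excluded_middle_informative => [Hw'|[]] //.
  exact: (hR r (exist _ z Hz') (exist _ w Hw')).
- exact/esym/(hK (exist _ z Hz')).
Qed.

Lemma ball_hom_transfer {n m a a' x y T} :
  0 < m <= n -> simk I kappa n x a -> simk I kappa n a' y -> adj I x y ->
  ball_hom kappa a m T -> exists2 T', ball_hom kappa a' m.-1 T' & within I 1 (T a) (T' a').
Proof.
move=> /andP [m_gt0 mn] Hxa Ha'y Hxy HT.
have [f1 Hf1 f1x] := simk_ball_hom Hxa; have [f2 Hf2 f2a'] := simk_ball_hom Ha'y.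
rewrite -f1x in HT; have HG := ball_hom_comp (ball_hom_le mn Hf1) HT.
have Hxy1 := within1_adj Hxy.
have HGy : ball_hom kappa y (m - 1) (T \o f1) by apply: ball_hom_shift m_gt0 HG Hxy1.
rewrite subn1 -f2a' in HGy.
exists (T \o f1 \o f2); first exact: ball_hom_comp (ball_hom_le (leq_trans (leq_pred m) mn) Hf2) HGy.
by rewrite /= f2a' -f1x; apply: ball_hom_within HG m_gt0 Hxy1.
Qed.

End BallHomomorphisms.

Lemma sparse_colour_inj {CN RN C} {I : interp CN RN} {kappa : I -> option C} {n c z z' col} :
  sparse I kappa n -> within I n c z -> within I n c z' ->
  kappa z = Some col -> kappa z' = Some col -> z = z'.
Proof.
move=> Hsp Hz Hz' Hcz Hcz'.
by case: (classic (z = z')) => // Hne; case: (Hsp c z z' Hz Hz' Hne col col Hcz Hcz').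
Qed.

Lemma maps_into_quotient {CN RN} (I : interp CN RN) (R : I -> I -> Prop) :
  maps_into I (quotient I R).
Proof.
exists (fun x => exist (fun S => exists y, S = R y) (R x) (ex_intro _ x erefl)).
by split=> [A x HA | r x y Hr]; [exists x | exists x, y].
Qed.

Lemma maps_into_trans {CN RN} {I J L : interp CN RN} :
  maps_into I J -> maps_into J L -> maps_into I L.
Proof.
move=> [f [fA fR]] [g [gA gR]].
by exists (g \o f); split=> [A x /fA /gA | r x y /fR /gR].
Qed.

Definition hom_upto {CN RN} (Q I : interp CN RN) (R : I -> I -> Prop) (rep : Q -> I) :=
  (forall A q, cnc Q A q -> exists2 x, R x (rep q) & cnc I A x) /\
  (forall r q q', rol Q r q q' -> exists x y, [/\ R x (rep q), R y (rep q') & rol I r x y]).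

Lemma maps_into_quotient_hom_upto {CN RN} {Q I : interp CN RN} {R : I -> I -> Prop} :
  (forall x, R x x) -> maps_into Q (quotient I R) -> exists rep, hom_upto Q I R rep.
Proof.
move=> Rrefl [g [gA gR]].
pose rep q := proj1_sig (constructive_indefinite_description _ (proj2_sig (g q))).
have repE q : proj1_sig (g q) = R (rep q).
  by rewrite /rep; case: constructive_indefinite_description.
have Hclass q x : proj1_sig (g q) = R x -> R x (rep q).
  by rewrite repE => <-; apply: Rrefl.
exists rep; split=> [A q /gA [x [/Hclass Hx HAx]] | r q q' /gR [x [y [/Hclass Hx [/Hclass Hy Hr]]]]].
- by exists x.
- by exists x, y.
Qed.

Definition asbool (P : Prop) : bool := if excluded_middle_informative P then true else false.

Lemma asboolP (P : Prop) : reflect P (asbool P).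
Proof. by rewrite /asbool; case: excluded_middle_informative => H; constructor. Qed.

Lemma connect_short_path (T : finType) (e : rel T) a b :
  connect e a b -> exists p, [/\ path e a p, last a p = b & size p < #|T|].
Proof.
case/connectP=> p ep ->; case: (shortenP ep) => p' ep' /card_uniqP Huniq _.
exists p'; split=> //; have := max_card (mem (a :: p')); by rewrite Huniq.
Qed.

Lemma connect_root_sym {T : finType} {e : rel T} :
  symmetric e -> forall x, connect e (root e x) x.
Proof. by move=> e_sym x; rewrite (sym_connect_sym e_sym) connect_root. Qed.

Section Lift.

Variables (CN RN C : Type) (I : interp CN RN) (kappa : I -> option C) (K k : nat).
Variables (QT : finType) (QA : CN -> QT -> Prop) (Qr : RN -> QT -> QT -> Prop) (rep : QT -> I).
Hypothesis sparseK : sparse I kappa K.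
Hypothesis k2K : 2 * k <= K.
Hypothesis cardQ : #|QT| <= k.
Hypothesis rep_hom : hom_upto (Interp QT QA Qr) I (simk I kappa K) rep.

Definition gaifman : rel QT := fun q q' => asbool (exists r, Qr r q q' \/ Qr r q' q).

Lemma gaifman_sym : symmetric gaifman.
Proof.
by move=> q q'; apply/asboolP/asboolP => -[r Hr]; exists r; tauto.
Qed.

Lemma gaifman_edge q q' : gaifman q q' ->
  exists x y, [/\ simk I kappa K x (rep q), simk I kappa K y (rep q') & adj I x y].
Proof.
case: rep_hom => _ repR /asboolP [r [/repR [x [y [Hx Hy Hr]]] | /repR [y [x [Hy Hx Hr]]]]].
- by exists x, y; split=> //; exists r; left.
- by exists x, y; split=> //; exists r; right.
Qed.

Definition centre q := rep (root gaifman q).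

Lemma centre_connect {q q'} : connect gaifman q q' -> centre q = centre q'.
Proof. by rewrite /centre => /(rootP (sym_connect_sym gaifman_sym)) ->. Qed.

Lemma card_pos (q : QT) : 0 < k.
Proof. by apply: leq_trans cardQ; apply/card_gt0P; exists q. Qed.

Lemma ball_hom_along_path {q p m T} :
  path gaifman q p -> size p <= m <= K -> ball_hom kappa (rep q) m T ->
  exists2 T', ball_hom kappa (rep (last q p)) (m - size p) T'
            & within I (size p) (T (rep q)) (T' (rep (last q p))).
Proof.
elim: p q m T => [|q1 p IH] q m T /=; first by rewrite subn0 => _ _ HT; exists T.
move=> /andP [/gaifman_edge [x [y [Hx Hy Hxy]]] Hp] /andP [pm mK] HT.
have m_range : 0 < m <= K by rewrite mK andbT; apply: leq_trans pm.
have [T1 HT1 HT1w] := ball_hom_transfer m_range Hx (simk_sym Hy) Hxy HT.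
have [|T' HT' HT'w] := IH q1 m.-1 T1 Hp _ HT1; first by apply/andP; split; lia.
exists T'; first by rewrite subnS -subn1 subnAC subn1.
by have := within_trans HT1w HT'w; rewrite add1n.
Qed.

Lemma transfer_exists q :
  exists T, ball_hom kappa (rep q) (K - k.-1) T /\ within I k.-1 (centre q) (T (rep q)).
Proof.
case/connect_short_path: (connect_root_sym gaifman_sym q) => p [Hp Hlast p_lt].
have pk : size p <= k.-1 by have := leq_trans p_lt cardQ; lia.
have [|T HT HTw] := ball_hom_along_path Hp _ (ball_hom_id (kappa:=kappa) _ K).
  by apply/andP; split; lia.
rewrite Hlast in HT HTw; exists T; split; first by apply: ball_hom_le HT; lia.
exact: within_le pk HTw.
Qed.

Definition transfer q : I -> I :=
  proj1_sig (constructive_indefinite_description _ (transfer_exists q)).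

Lemma transferP q :
  ball_hom kappa (rep q) (K - k.-1) (transfer q) /\
  within I k.-1 (centre q) (transfer q (rep q)).
Proof. by rewrite /transfer; case: constructive_indefinite_description. Qed.

Definition coloured q := isSome (kappa (rep q)).

(* Uncoloured points are alone in their [~]-class, so uncoloured edges of [Q] are
   realised exactly by edges of [I]. *)
Definition block : rel QT := fun q q' => [&& ~~ coloured q, ~~ coloured q' & gaifman q q'].

Lemma block_sym : symmetric block.
Proof. by move=> q q'; rewrite /block gaifman_sym; case: (coloured q); case: (coloured q'). Qed.

Lemma simk_rep_uncoloured {q x} : ~~ coloured q -> simk I kappa K x (rep q) -> x = rep q.
Proof. by rewrite /coloured => Hq /simk_uncoloured; apply; case: (kappa _) Hq. Qed.

Lemma block_edge q q' : block q q' -> adj I (rep q) (rep q').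
Proof.
case/and3P=> uq uq' /gaifman_edge [x [y [Hx Hy Hxy]]].
by rewrite -(simk_rep_uncoloured uq Hx) -(simk_rep_uncoloured uq' Hy).
Qed.

Lemma within_block_path {q p} :
  path block q p -> within I (size p) (rep q) (rep (last q p)).
Proof.
elim: p q => [|q1 p IH] q //=.
case/andP=> /block_edge Hq Hp.
by have := within_trans (within1_adj Hq) (IH _ Hp); rewrite add1n.
Qed.

Lemma within_block_root q : within I k.-1 (rep (root block q)) (rep q).
Proof.
case/connect_short_path: (connect_root_sym block_sym q) => p [Hp Hlast p_lt].
have := within_block_path Hp; rewrite Hlast; apply: within_le.
by have := leq_trans p_lt cardQ; lia.
Qed.

Lemma centre_block_root q : centre (root block q) = centre q.
Proof.
apply/centre_connect/(connect_sub _ (connect_root_sym block_sym q)).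
by move=> a b /and3P [_ _ Hab]; apply: connect1.
Qed.

Definition lift q := transfer (root block q) (rep q).

Lemma lift_anchor {q x} : simk I kappa K x (rep q) ->
  exists2 G, ball_hom kappa x 1 G & G x = lift q /\ within I (k.-1 + k.-1) (centre q) (G x).
Proof.
move=> Hx; have k_gt0 := card_pos q.
have [f1 Hf1 f1x] := simk_ball_hom Hx.
have [HT HTw] := transferP (root block q).
have Hq := within_block_root q.
have HTq : ball_hom kappa (rep q) (K - k.-1 - k.-1) (transfer (root block q)).
  by apply: ball_hom_shift HT Hq; lia.
rewrite -f1x in HTq.
have HG := ball_hom_comp (ball_hom_le (leq_subr _ _) (ball_hom_le (leq_subr _ _) Hf1)) HTq.
exists (transfer (root block q) \o f1); first by apply: ball_hom_le _ HG; lia.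
rewrite /= f1x; split=> //.
rewrite -centre_block_root; apply: within_trans HTw _.
by apply: ball_hom_within HT _ Hq; lia.
Qed.

Lemma lift_coloured_unique q z : coloured q ->
  within I K (centre q) z -> kappa z = kappa (rep q) -> z = lift q.
Proof.
move=> Cq Hz Ez.
have [G [_ _ GK] [Gx Gw]] := lift_anchor (simk_refl K (rep q)).
move: Cq; rewrite /coloured; case E: (kappa (rep q)) => [col|] // _.
have Hl : within I K (centre q) (lift q) by rewrite -Gx; apply: within_le _ Gw; lia.
have Cl : kappa (lift q) = Some col by rewrite -Gx GK ?E //; apply: within_refl.
by apply: sparse_colour_inj sparseK Hz Hl _ Cl; rewrite Ez.
Qed.

Lemma lift_edge {q q' x y} : gaifman q q' -> coloured q' ->
  simk I kappa K x (rep q) -> simk I kappa K y (rep q') -> adj I x y ->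
  exists2 G, ball_hom kappa x 1 G & G x = lift q /\ G y = lift q'.
Proof.
move=> Hqq' Cq' Hx Hy Hxy.
have [G HG [Gx Gw]] := lift_anchor Hx.
exists G => //; split=> //.
have k_gt0 := card_pos q; have Hy1 := within1_adj Hxy.
apply: lift_coloured_unique => //.
- rewrite -(centre_connect (connect1 Hqq')).
  by apply: within_le _ (within_trans Gw (ball_hom_within HG (leqnn 1) Hy1)); lia.
- by case: HG => _ _ GK; rewrite GK ?(simk_colour Hy).
Qed.

Lemma lift_block_rol r q q' :
  block q q' -> rol I r (rep q) (rep q') -> rol I r (lift q) (lift q').
Proof.
move=> Hqq' Hr.
have Eroot : root block q' = root block q.
  by apply/esym/(rootP (sym_connect_sym block_sym))/connect1.
have [[_ HR _] _] := transferP (root block q).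
have Hq := within_block_root q; have Hq' := within_block_root q'.
rewrite Eroot in Hq'; rewrite /lift Eroot.
by apply: HR Hr; apply: within_le (_ : k.-1 <= K - k.-1) _ => //; lia.
Qed.

Lemma lift_hom : is_hom (Interp QT QA Qr) I lift.
Proof.
have [repA repR] := rep_hom.
split=> [A q /repA [x Hx HAx] | r q q' /[dup] Hr /repR [x [y [Hx Hy Hxy]]]] /=.
  by have [G [GA _ _] [<- _]] := lift_anchor Hx; apply: GA (within_refl _ _) HAx.
have Hg : gaifman q q' by apply/asboolP; exists r; left.
have Hadj : adj I x y by exists r; left.
case Cq' : (coloured q').
  have [G [_ GR _] [<- <-]] := lift_edge Hg Cq' Hx Hy Hadj.
  by apply: GR Hxy; [apply: within_refl | apply: within1_adj].
case Cq : (coloured q).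
  have Hg' : gaifman q' q by rewrite gaifman_sym.
  have [G [_ GR _] [<- <-]] := lift_edge Hg' Cq Hy Hx (adj_sym Hadj).
  by apply: GR Hxy; [apply/within1_adj/adj_sym | apply: within_refl].
apply: lift_block_rol; first by rewrite /block Cq Cq' Hg.
by rewrite -(simk_rep_uncoloured _ Hx) ?Cq // -(simk_rep_uncoloured _ Hy) ?Cq'.
Qed.

End Lift.

Arguments lift_hom {CN RN C I kappa K k QT QA Qr rep}.

Theorem theorem6 (CN RN C : Type) (I : interp CN RN) (kappa : I -> option C)
    (k : nat) (QT : finType) (QA : CN -> QT -> Prop) (Qr : RN -> QT -> QT -> Prop) :
  let K := 2 * k ^ 3 in
  let Q := Interp QT QA Qr in
  sparse I kappa K ->
  #|QT| <= k ->
  (maps_into Q I <-> maps_into Q (quotient I (simk I kappa K))).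
Proof.
move=> K Q sparseK cardQ.
split=> [QI | /(maps_into_quotient_hom_upto (simk_refl K)) [rep rep_hom]].
  exact: maps_into_trans QI (maps_into_quotient _ _).
have k2K : 2 * k <= K.
  rewrite leq_mul2l; case: k {K Q sparseK cardQ rep rep_hom} => // k.
  by rewrite -[X in X <= _]expn1 leq_pexp2l.
by eexists; apply: lift_hom sparseK k2K cardQ rep_hom.
Qed.
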